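(* For $\alpha_2\in\mathbb{C}$ consider the Hamiltonian system $$\frac{dq_1}{dt}=q_1^2+p_2,\quad \frac{dp_1}{dt}=-2q_1p_1+\alpha_2-\frac12,\quad \frac{dq_2}{dt}=-3p_2^2+p_1+\frac t2,\quad \frac{dp_2}{dt}=q_2,$$ with Hamiltonian $H=q_1^2p_1+(\frac12-\alpha_2)q_1-p_2^3+\frac t2p_2-\frac{q_2^2}{2}+p_1p_2$. Write $P:=p_1+t-2p_2^2+4q_1(q_2+q_1p_2)$ and $( * )=(q_1,p_1,q_2,p_2,t;\alpha_2)$. Define $$s_0:( * )\mapsto\left(q_1+\frac{\frac12-\alpha_2}{p_1},\,p_1,\,q_2,\,p_2,\,t;\,1-\alpha_2\right),$$ $$s_1:( * )\mapsto\Big(q_1+\frac{2\alpha_2+1}{2P},\ p_1-\frac{2(2\alpha_2+1)(q_2+2q_1p_2)}{P}+\frac{(2\alpha_2+1)^2(p_2+2q_1^2)}{P^2},$$ $$q_2-\frac{2(2\alpha_2+1)(p_2-q_1^2)}{P}+\frac{3(2\alpha_2+1)^2q_1}{P^2}+\frac{(2\alpha_2+1)^3}{2P^3},\ p_2-\frac{2(2\alpha_2+1)q_1}{P}-\frac{(2\alpha_2+1)^2}{2P^2},\ t;\,-1-\alpha_2\Big),$$ $$\pi:( * )\mapsto\left(-q_1,\,-P,\,-(q_2+4q_1(q_1^2+p_2)),\,-(p_2+2q_1^2),\,t;\,-\alpha_2\right).$$ Then $s_0,s_1,\pi$ are Bäcklund transformations of this system (each maps solutions of the system with parameter $\alpha_2$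 to solutions of the system with the transformed parameter), and they generate a group of Bäcklund transformations realizing the extended affine Weyl group of type $A_1^{(1)}$.
   Context: The extended affine Weyl group of type $A_1^{(1)}$ is the group generated by $s_0,s_1,\pi$ with the relations $s_0^2=s_1^2=\pi^2=1$ and $\pi s_0=s_1\pi$. A transformation is applied to a rational function $g$ of $(q_1,p_1,q_2,p_2,t,\alpha_2)$ by substituting the images of the variables and the parameter into $g$. *)

From mathcomp Require Import all_boot all_order all_algebra.
Set Implicit Arguments. Unset Strict Implicit. Unset Printing Implicit Defensive.
Import GRing.Theory.
Local Open Scope ring_scope.

(* A "solution" of the system lives in a differential field (F, d) of
   characteristic 0 (e.g. the field of meromorphic functions in t with
   d = d/dt). *)
Definition is_derivation (F : fieldType) (d : F -> F) : Prop :=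
  (forall x y, d (x + y) = d x + d y) /\ (forall x y, d (x * y) = d x * y + x * d y).

Record pt (F : Type) := Pt { q1 : F; p1 : F; q2 : F; p2 : F; tm : F; al2 : F }.

Section Sys.
Variable F : fieldType.

Definition Ham (x : pt F) : F :=
  q1 x ^+ 2 * p1 x + (2^-1 - al2 x) * q1 x - p2 x ^+ 3 + tm x / 2 * p2 x
  - q2 x ^+ 2 / 2 + p1 x * p2 x.

(* x is a solution of the system with parameter al2 x, w.r.t. derivation d:
   t is the independent variable (d t = 1), alpha2 is a constant (d alpha2 = 0). *)
Definition is_solution (d : F -> F) (x : pt F) : Prop :=
  d (tm x) = 1 /\ d (al2 x) = 0 /\
  d (q1 x) = q1 x ^+ 2 + p2 x /\
  d (p1 x) = - (2 * q1 x * p1 x) + al2 x - 2^-1 /\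
  d (q2 x) = - (3 * p2 x ^+ 2) + p1 x + tm x / 2 /\
  d (p2 x) = q2 x.

Definition PP (x : pt F) : F :=
  p1 x + tm x - 2 * p2 x ^+ 2 + 4 * q1 x * (q2 x + q1 x * p2 x).

Definition bs0 (x : pt F) : pt F :=
  Pt (q1 x + (2^-1 - al2 x) / p1 x) (p1 x) (q2 x) (p2 x) (tm x) (1 - al2 x).

Definition bs1 (x : pt F) : pt F :=
  let P := PP x in
  let c := 2 * al2 x + 1 in
  Pt (q1 x + c / (2 * P))
     (p1 x - 2 * c * (q2 x + 2 * q1 x * p2 x) / P + c ^+ 2 * (p2 x + 2 * q1 x ^+ 2) / P ^+ 2)
     (q2 x - 2 * c * (p2 x - q1 x ^+ 2) / P + 3 * c ^+ 2 * q1 x / P ^+ 2 + c ^+ 3 / (2 * P ^+ 3))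
     (p2 x - 2 * c * q1 x / P - c ^+ 2 / (2 * P ^+ 2))
     (tm x) (-1 - al2 x).

Definition bpi (x : pt F) : pt F :=
  Pt (- q1 x) (- PP x) (- (q2 x + 4 * q1 x * (q1 x ^+ 2 + p2 x)))
     (- (p2 x + 2 * q1 x ^+ 2)) (tm x) (- al2 x).

End Sys.

(* The Bäcklund property of [bs0] and [bpi] is a direct computation: differentiate the
   new coordinates with the Leibniz rule, substitute the equations of motion and
   normalize as rational functions. Everything about [bs1] then follows from the
   conjugation [bs1 = bpi \o bs0 \o bpi], since [bpi] is an involution exchanging
   [p1] and [-PP]. *)
From mathcomp Require Import all_boot all_order all_algebra.
From mathcomp Require Import ring.
Local Open Scope ring_scope.
Import GRing.Theory.
Set Implicit Arguments.

Section Derivation.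
Variables (F : fieldType) (d : F -> F).
Hypothesis derivation_d : is_derivation d.

Lemma derivationD x y : d (x + y) = d x + d y. Proof. exact: derivation_d.1. Qed.

Lemma derivationM x y : d (x * y) = d x * y + x * d y. Proof. exact: derivation_d.2. Qed.

Lemma derivation0 : d 0 = 0.
Proof. by apply: (addrI (d 0)); rewrite -derivationD !addr0. Qed.

Lemma derivationN x : d (- x) = - d x.
Proof. by apply: (addrI (d x)); rewrite -derivationD !subrr derivation0. Qed.

Lemma derivation1 : d 1 = 0.
Proof.
have d11 := derivationM 1 1; rewrite !mulr1 mul1r in d11.
by apply: (addrI (d 1)); rewrite addr0 -d11.
Qed.

Lemma derivation_nat n : d n%:R = 0.
Proof.
elim: n => [|n IHn]; first exact: derivation0.
by rewrite -addn1 natrD derivationD IHn derivation1 addr0.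
Qed.

Lemma derivationV x : d x^-1 = - d x * x^-1 ^+ 2.
Proof.
have [->|x_neq0] := eqVneq x 0; first by rewrite invr0 derivation0 oppr0 mul0r.
have dxxV : x * d x^-1 = - (d x * x^-1).
  by apply/eqP; rewrite -addr_eq0 addrC -derivationM mulfV // derivation1.
have -> : d x^-1 = x^-1 * (x * d x^-1) by rewrite mulrA mulVf // mul1r.
by rewrite dxxV; ring.
Qed.

Lemma derivationX x n : d (x ^+ n) = n%:R * x ^+ n.-1 * d x.
Proof.
elim: n => [|[|n] IHn]; first by rewrite derivation1 !mul0r.
  by rewrite expr1 expr0 !mul1r.
by rewrite exprS derivationM IHn /= -[n.+2]addn1 natrD exprS; ring.
Qed.

End Derivation.

Ltac derivation_simpl d_der :=
  repeat rewrite ?(derivationD d_der) ?(derivationN d_der) ?(derivationM d_der)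
                 ?(derivationV d_der) ?(derivationX d_der) ?(derivation_nat d_der)
                 ?(derivation0 d_der) ?(derivation1 d_der).

Section BacklundTransformations.
Variable F : fieldType.
Hypothesis charF0 : [pchar F] =i pred0.

Let two_neq0 : (2 : F) != 0. Proof. by move/pcharf0P: charF0 => ->. Qed.

Lemma bpiK (x : pt F) : bpi (bpi x) = x.
Proof. by case: x => a b c e t al; rewrite /bpi /PP /=; congr Pt; ring. Qed.

Lemma p1_bpi (x : pt F) : p1 (bpi x) = - PP x. Proof. by []. Qed.

Lemma PP_bpi (x : pt F) : PP (bpi x) = - p1 x.
Proof. by case: x => a b c e t al; rewrite /bpi /PP /=; ring. Qed.

Lemma bs0K (x : pt F) : p1 x != 0 -> bs0 (bs0 x) = x.
Proof.
by case: x => a b c e t al /= b_neq0; rewrite /bs0 /=; congr Pt; field; rewrite ?b_neq0 ?two_neq0.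
Qed.

Lemma bpi_bs0 (x : pt F) : p1 x != 0 -> bpi (bs0 x) = bs1 (bpi x).
Proof.
rewrite /bs1 PP_bpi; case: x => a b c e t al /= b_neq0.
rewrite /bpi /bs0 /PP /=; congr Pt; field;
  by rewrite ?mulf_neq0 ?expf_neq0 ?oppr_eq0 ?b_neq0 ?two_neq0.
Qed.

Lemma bs1E (x : pt F) : PP x != 0 -> bs1 x = bpi (bs0 (bpi x)).
Proof. by move=> PP_neq0; rewrite bpi_bs0 ?bpiK // p1_bpi oppr_eq0. Qed.

Lemma PP_bs1 (x : pt F) : PP x != 0 -> PP (bs1 x) = PP x.
Proof. by move=> PP_neq0; rewrite bs1E // PP_bpi /= opprK. Qed.

Lemma bs1K (x : pt F) : PP x != 0 -> bs1 (bs1 x) = x.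
Proof.
move=> PP_neq0; have PP1_neq0 : PP (bs1 x) != 0 by rewrite PP_bs1.
by rewrite [bs1 (bs1 x)]bs1E // {1}bs1E // bpiK bs0K ?bpiK // p1_bpi oppr_eq0.
Qed.

Variable d : F -> F.
Hypothesis derivation_d : is_derivation d.

Lemma bs0_solution (x : pt F) :
  is_solution d x -> p1 x != 0 -> is_solution d (bs0 x).
Proof.
case: x => a b c e t al [/= dt [dal [da [db [dc de]]]]] /= b_neq0.
rewrite /is_solution /=; derivation_simpl derivation_d.
rewrite dt dal da db dc de subr0.
by repeat apply: conj; field; rewrite ?b_neq0 ?two_neq0.
Qed.

Lemma bpi_solution (x : pt F) : is_solution d x -> is_solution d (bpi x).
Proof.
case: x => a b c e t al [/= dt [dal [da [db [dc de]]]]].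
rewrite /is_solution /= /PP /=; derivation_simpl derivation_d.
rewrite dt dal da db dc de oppr0.
by repeat apply: conj; field; rewrite ?two_neq0.
Qed.

Lemma bs1_solution (x : pt F) :
  is_solution d x -> PP x != 0 -> is_solution d (bs1 x).
Proof.
move=> x_sol PP_neq0; rewrite bs1E //.
apply/bpi_solution/bs0_solution; first exact: bpi_solution.
by rewrite p1_bpi oppr_eq0.
Qed.

End BacklundTransformations.

Theorem theorem6p2 (F : fieldType) (d : F -> F) :
  [pchar F] =i pred0 ->
  is_derivation d ->
  (forall x : pt F, is_solution d x -> p1 x != 0 -> is_solution d (bs0 x)) /\
      (forall x : pt F, is_solution d x -> PP x != 0 -> is_solution d (bs1 x)) /\
      (forall x : pt F, is_solution d x -> is_solution d (bpi x)) /\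
      (forall x : pt F, p1 x != 0 -> bs0 (bs0 x) = x) /\
      (forall x : pt F, PP x != 0 -> bs1 (bs1 x) = x) /\
      (forall x : pt F, bpi (bpi x) = x) /\
      (forall x : pt F, p1 x != 0 -> bpi (bs0 x) = bs1 (bpi x)).
Proof.
move=> charF0 derivation_d.
split; first exact: bs0_solution.
split; first exact: bs1_solution.
split; first exact: bpi_solution.
split; first exact: bs0K.
split; first exact: bs1K.
split; first exact: bpiK.
exact: bpi_bs0.
Qed.
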